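(* For all $x,y\in A^{\mathbb N}$, if $\mathfrak d_L(x,y)=0$, then for every $p\in\mathbb N$ there exist $i,j\in\mathbb N$ such that $x_{[i,i+p)}=y_{[j,j+p)}$.
   Context: $A$ is a finite alphabet, $x_{[i,j)}=x_i\cdots x_{j-1}$. The Levenshtein distance between finite words is $d_L(u,v)=\frac{|u|+|v|}{2}-\ell$, where $\ell$ is the length of a longest common subsequence of $u$ and $v$. The Feldman pseudo-metric is $\mathfrak d_L(x,y)=\limsup_{l\to\infty}\frac{d_L(x_{[0,l)},y_{[0,l)})}{l}$. *)

From mathcomp Require Import all_boot all_order all_algebra.
From mathcomp Require Import all_classical all_reals all_analysis.
Set Implicit Arguments. Unset Strict Implicit. Unset Printing Implicit Defensive.
Import Order.TTheory GRing.Theory Num.Theory.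
Local Open Scope ring_scope.

Definition slice (A : Type) (x : nat -> A) (i j : nat) : seq A :=
  [seq x k | k <- iota i (j - i)].

Definition lcs (A : eqType) (u v : seq A) : nat :=
  \max_(m : (size u).-tuple bool | subseq (mask m u) v) size (mask m u).

Definition dL (R : realType) (A : eqType) (u v : seq A) : R :=
  (size u + size v)%:R / 2 - (lcs u v)%:R.

Definition feldman (R : realType) (A : eqType) (x y : nat -> A) : R :=
  limn_sup (fun l : nat => dL R (slice x 0 l) (slice y 0 l) / l%:R).

From mathcomp Require Import all_boot all_order all_algebra.
From mathcomp Require Import all_classical all_reals all_analysis.
From mathcomp Require Import zify.
Set Implicit Arguments. Unset Strict Implicit. Unset Printing Implicit Defensive.
Import Order.TTheory GRing.Theory Num.Theory.
Local Open Scope ring_scope.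

(* Suppose x and y have no common factor of length p, and let s be a common
   subsequence of u = x_[0,l) and v = y_[0,l). Cut u into blocks of length p
   and split s and v accordingly. The part of s matched inside a block cannot
   be the whole block matched against an equally long stretch of v, for that
   stretch would be a common factor; so each block either leaves a letter of u
   or a letter of v unmatched. Hence 2|s| <= 2l - floor(l/p), i.e.
   d_L(u, v) >= floor(l/p)/2 >= l/(4p) for l >= p, and the limsup defining
   the Feldman pseudo-metric is at least 1/(4p). *)

Lemma limn_sup_ge (R : realType) (u : R^nat) (c : R) (N : nat) :
  has_ubound (range u) -> has_lbound (range u) ->
  (forall n, (N <= n)%N -> c <= u n) -> c <= limn_sup u.
Proof.
move=> ub lb ge_c.
have -> : limn_sup u = inf (range (sups u)).
  by apply/cvg_lim => //; exact: cvg_sups_inf.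
apply: lb_le_inf; first by exists (sups u 0%N), 0%N.
move=> _ [n _ <-]; apply: le_trans (ge_c (maxn n N) (leq_maxr _ _)) _.
apply: ub_le_sup; first exact: has_ubound_sdrop.
by exists (maxn n N) => //=; exact: leq_maxl.
Qed.

Section CommonSubsequences.
Variable A : eqType.
Implicit Types u v s w : seq A.

Lemma subseq_cat_splitl u1 u2 s : subseq s (u1 ++ u2) ->
  exists s1 s2, [/\ s = s1 ++ s2, subseq s1 u1 & subseq s2 u2].
Proof.
case/subseqP=> m size_m ->; exists (mask (take (size u1) m) u1).
exists (mask (drop (size u1) m) u2); split; rewrite ?mask_subseq //.
by rewrite -mask_cat ?cat_take_drop // size_takel // size_m size_cat leq_addr.
Qed.

Lemma subseq_cat_splitr v s1 s2 : subseq (s1 ++ s2) v ->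
  exists v1 v2, [/\ v = v1 ++ v2, subseq s1 v1 & subseq s2 v2].
Proof.
elim: v s1 => [|y v IHv] [|x s1] /=.
- by move=> s2_nil; exists [::], [::]; rewrite subseq0.
- by [].
- by move=> sub_s2; exists [::], (y :: v).
case: eqP => [<-|_] sub.
  have [v1 [v2 [-> sub1 sub2]]] := IHv s1 sub.
  by exists (x :: v1), v2; rewrite /= eqxx.
have [v1 [v2 [-> sub1 sub2]]] := IHv (x :: s1) sub.
exists (y :: v1), v2; split => //.
exact: subseq_trans sub1 (subseq_cons _ _).
Qed.

Lemma lcs_common_subseq u v :
  exists s, [/\ subseq s u, subseq s v & size s = lcs u v].
Proof.
pose m0 := nseq_tuple (size u) false.
have nil_common : subseq (mask m0 u) v by rewrite mask_false sub0seq.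
rewrite /lcs (bigop.bigmax_eq_arg m0) //; case: arg_maxnP => // m sub_m _.
by exists (mask m u); rewrite mask_subseq.
Qed.

Lemma lcs_le_size u v : (lcs u v <= size u)%N.
Proof. by have [s [su _ <-]] := lcs_common_subseq u v; exact: size_subseq. Qed.

Definition no_common_factor p u v :=
  forall w, size w = p -> infix w u -> ~~ infix w v.

Lemma no_common_factor_drop p k u v1 v2 :
  no_common_factor p u (v1 ++ v2) -> no_common_factor p (drop k u) v2.
Proof.
move=> nocf w size_w w_u; apply: contraNN (nocf w size_w _) => [w_v2|].
  exact: infix_catl.
exact: infix_trans w_u (infix_drop _ _).
Qed.

Lemma no_common_factor_common_subseq p u v s : (0 < p)%N ->
  no_common_factor p u v -> subseq s u -> subseq s v ->
  (size u %/ p + 2 * size s <= size u + size v)%N.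
Proof.
move=> p_gt0; elim: {u}(size u) {-2}u (leqnn (size u)) v s => [|n IHn] u.
  rewrite leqn0 => /eqP/size0nil -> v s _.
  by rewrite subseq0 => /eqP -> _; rewrite div0n.
move=> size_u v s nocf su sv.
have [lt_u_p|le_p_u] := ltnP (size u) p.
  by rewrite divn_small //; have := size_subseq sv; have := size_subseq su; lia.
have size_take : size (take p u) = p by rewrite size_takel.
move: su; rewrite -[u in subseq _ u](cat_take_drop p).
case/subseq_cat_splitl=> s1 [s2 [s_eq s1u s2u]].
move: sv; rewrite s_eq => /subseq_cat_splitr[v1 [v2 [v_eq s1v s2v]]].
rewrite v_eq in nocf.
have size_drop_u : (size (drop p u) <= n)%N by rewrite size_drop; lia.
have IH := IHn _ size_drop_u _ _ (no_common_factor_drop (k := p) nocf) s2u s2v.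
have short_s1 : (size s1 < p)%N || (size s1 < size v1)%N.
  rewrite -size_take !ltn_neqAle (size_subseq s1u) (size_subseq s1v) !andbT.
  rewrite -negb_and; apply: contra (nocf (take p u) size_take (infix_take _ _)).
  rewrite (size_subseq_leqif s1u).2 (size_subseq_leqif s1v).2.
  by case/andP=> /eqP <- /eqP ->; rewrite prefix_infix.
have size_u_eq : size u = (p + size (drop p u))%N by rewrite size_drop; lia.
rewrite size_u_eq v_eq !size_cat divnDl ?dvdnn // divnn p_gt0.
have := size_subseq s1v; have := size_subseq s1u; rewrite size_take.
move/orP: short_s1; lia.
Qed.

End CommonSubsequences.

Lemma dL_eq_size (R : realType) (A : eqType) (u v : seq A) :
  size u = size v -> dL R u v = (size u - lcs u v)%:R.
Proof.
by move=> eq_uv; rewrite /dL -eq_uv natrB ?lcs_le_size // natrD mulrDl -splitr.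
Qed.

Lemma dL_ge_no_common_factor (R : realType) (A : eqType) p (u v : seq A) :
  (0 < p)%N -> (p <= size u)%N -> size u = size v -> no_common_factor p u v ->
  (4 * p)%:R^-1 <= dL R u v / (size u)%:R.
Proof.
move=> p_gt0 le_p_u eq_uv nocf; rewrite dL_eq_size //.
have [s [su sv <-]] := lcs_common_subseq u v.
have := no_common_factor_common_subseq p_gt0 nocf su sv.
have u_gt0 : (0 < size u)%N by apply: leq_trans le_p_u.
rewrite ler_pdivlMr ?ltr0n // mulrC ler_pdivrMr ?ltr0n ?muln_gt0 ?p_gt0 //.
rewrite -natrM ler_nat.
have := ltn_ceil (size u) p_gt0; have : (0 < size u %/ p)%N by rewrite divn_gt0.
rewrite -eq_uv; nia.
Qed.

Lemma size_slice (A : Type) (x : nat -> A) i j : size (slice x i j) = (j - i)%N.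
Proof. by rewrite size_map size_iota. Qed.

Lemma infix_slice0 (A : eqType) (x : nat -> A) l w :
  infix w (slice x 0 l) -> exists i, w = slice x i (i + size w).
Proof.
case/infixP=> a [b eq_ab]; exists (size a); rewrite /slice addKn.
have size_ab : (size a + size w <= l)%N.
  by have := congr1 size eq_ab; rewrite size_slice !size_cat; lia.
have w_eq : take (size w) (drop (size a) (slice x 0 l)) = w.
  by rewrite eq_ab drop_size_cat // take_size_cat.
rewrite -{1}w_eq /slice subn0 -map_drop -map_take drop_iota take_iota add0n.
by congr (map x (iota _ _)); lia.
Qed.

Theorem lemmal (A : finType) (R : realType) (x y : nat -> A) :
  feldman R x y = 0 ->
  forall p : nat, exists i j : nat, slice x i (i + p) = slice y j (j + p).
Proof.
move=> feldman0 [|p]; first by exists 0%N, 0%N.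
apply: contrapT => no_match.
have nocf l : no_common_factor p.+1 (slice x 0 l) (slice y 0 l).
  move=> w size_w /infix_slice0[i wx]; apply/negP => /infix_slice0[j wy].
  by apply: no_match; exists i, j; rewrite -size_w -wx -wy.
pose f l := dL R (slice x 0 l) (slice y 0 l) / l%:R.
have f_ge l : (p.+1 <= l)%N -> (4 * p.+1)%:R^-1 <= f l.
  move=> le_p_l; have sx : size (slice x 0 l) = l by rewrite size_slice subn0.
  rewrite /f -[X in _ / X%:R]sx.
  apply: (dL_ge_no_common_factor R _ _ _ (nocf l));
  by rewrite ?sx ?size_slice ?subn0.
have f_range l : 0 <= f l <= 1.
  rewrite /f dL_eq_size !size_slice ?subn0 // divr_ge0 //=.
  have [->|l_gt0] := posnP l; first by rewrite invr0 mulr0.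
  by rewrite ler_pdivrMr ?ltr0n // mul1r ler_nat leq_subr.
have ub : has_ubound (range f) by exists 1 => _ [l _ <-]; case/andP: (f_range l).
have lb : has_lbound (range f) by exists 0 => _ [l _ <-]; case/andP: (f_range l).
have : (4 * p.+1)%:R^-1 <= feldman R x y := limn_sup_ge ub lb f_ge.
by rewrite feldman0 leNgt invr_gt0 ltr0n muln_gt0.
Qed.
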